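(* Let $x\neq0$ be represented by a tensor network on graph $G$ with $n$ vertices, and let $0\le\varepsilon_i\le\varepsilon$. Define $x^{(0)}=x$ and, for $i=1,\dots,n$: take a tensor network $(G,\mathbf C^{(1)},\dots,\mathbf C^{(n)})$ representing $x^{(i-1)}$ which is in canonical form centered at $v_i$, replace $\mathbf C^{(i)}$ by $\mathbf C^{(i)}+\delta^{(i)}$ with $\|\delta^{(i)}\|_F\le\varepsilon_i\|\mathbf C^{(i)}\|_F$, and let $x^{(i)}$ be the vectorized contraction of the resulting network. Then $\hat x=x^{(n)}$ satisfies $$\frac{\|\hat x-x\|_2}{\|x\|_2}\le n\varepsilon+O(\varepsilon^2)\quad(\varepsilon\to0).$$
   Context: Tensor network setup: A tensor network $(G,\mathbf T^{(1)},\dots,\mathbf T^{(n)})$ consists of a multigraph $G$ with vertices $v_1,\dots,v_n$, whose edges are either edges between distinct vertices (contracted legs) or self-loops (uncontracted legs), each edge having a dimension, and tensors $\mathbf T^{(j)}$ at $v_j$ with one mode per incident edge. Its contraction $\mathscr T_G(\mathbf T^{(1)},\dots,\mathbf T^{(n)})$ is obtained by summing over all contracted-edge indices the product of the entries of all $\mathbf T^{(j)}$. The environment matrix $M_{\mathbf T^{(j)}}$ of site $j$ is the matrix of the linear map $X\mapsto\mathrm{vec}(\mathscr T_G(\mathbf T^{(1)},\dots,X,\dots,\mathbf T^{(n)}))$ ($X$ in slot $j$) acting on $\mathrm{vec}(X)$. The network is in canonical form centered at $v_j$ if $M_{\mathbf T^{(j)}}$ is an isometry ($M^*M=I$). It is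 assumed that at every step such a canonical representation exists. *)

From HB Require Import structures.
From mathcomp Require Import all_boot all_order all_algebra.
Set Implicit Arguments. Unset Strict Implicit. Unset Printing Implicit Defensive.
Import Order.TTheory GRing.Theory Num.Theory.
Local Open Scope ring_scope.

(* A tensor network on a multigraph G with vertices 'I_n (v_1..v_n = 0..n-1),
   edges indexed by a finite type E, endpoints [ends e] (a self-loop, i.e.
   an uncontracted leg, when both endpoints coincide) and dimensions [d e]. *)
Section TensorNetwork.
Variables (C : numClosedFieldType) (n : nat) (E : finType)
          (ends : E -> 'I_n * 'I_n) (d : E -> nat).

Definition is_loop (e : E) : bool := (ends e).1 == (ends e).2.
Definition incident (j : 'I_n) (e : E) : bool :=
  ((ends e).1 == j) || ((ends e).2 == j).

Definition FullIdx := {dffun forall e : E, 'I_(d e)}.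
Definition LocIdx (j : 'I_n) :=
  {dffun forall e : {e : E | incident j e}, 'I_(d (val e))}.
Definition OutIdx := {dffun forall e : {e : E | is_loop e}, 'I_(d (val e))}.

Definition tensor (j : 'I_n) := {ffun LocIdx j -> C}.
Definition network := forall j : 'I_n, tensor j.
Definition outTensor := {ffun OutIdx -> C}.

Definition restr (j : 'I_n) (f : FullIdx) : LocIdx j :=
  @finfun _ (fun e : {e : E | incident j e} => 'I_(d (val e)))
     (fun e => f (val e)).

Definition contract (T : network) : outTensor :=
  [ffun o : OutIdx =>
     \sum_(f : FullIdx | [forall e : {e : E | is_loop e}, f (val e) == o e])
        \prod_(j < n) T j (restr j f)].

Definition replace (T : network) (j : 'I_n) (X : tensor j) : network :=
  @dfwith _ tensor T j X.

Definition frob (j : 'I_n) (X : tensor j) : C :=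
  sqrtC (\sum_(l : LocIdx j) `|X l| ^+ 2).
Definition norm2 (y : outTensor) : C := sqrtC (\sum_(o : OutIdx) `|y o| ^+ 2).

(* The environment
   matrix of site j is the matrix of X |-> vec(contract (replace T j X)):
   column c is the image of the c-th standard basis tensor. *)
Definition env_mx (T : network) (j : 'I_n) : 'M[C]_(#|OutIdx|, #|LocIdx j|) :=
  \matrix_(r, c)
     contract (replace T ([ffun l => (l == enum_val c)%:R] : tensor j))
              (enum_val r).

Definition adjmx (p q : nat) (M : 'M[C]_(p, q)) : 'M[C]_(q, p) :=
  (map_mx Num.conj_op M)^T.

(* canonical form centered at v_j: the environment matrix is an isometry *)
Definition canonical_at (T : network) (j : 'I_n) : Prop :=
  adjmx (env_mx T j) *m env_mx T j = 1%:M.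

Definition tn_step (eps_j : C) (j : 'I_n) (x y : outTensor) : Prop :=
  exists (T : network) (delta : tensor j),
    [/\ contract T = x, canonical_at T j,
        frob delta <= eps_j * frob (T j)
      & y = contract (replace T (T j + delta))].

End TensorNetwork.

From HB Require Import structures.
From mathcomp Require Import all_boot all_order all_algebra.
From mathcomp Require Import ring.
Set Implicit Arguments. Unset Strict Implicit. Unset Printing Implicit Defensive.
Import Order.TTheory GRing.Theory Num.Theory.
Local Open Scope ring_scope.

(* In a network in canonical form centered at v_j the map X |-> contraction
   with X at v_j is linear and, its matrix being an isometry, preserves norms.
   Perturbing the center by delta therefore moves x^(j-1) by a vector of norm
   ||delta||_F <= eps_j ||C^(j)||_F = eps_j ||x^(j-1)||.  Chaining the n steps
   with the triangle inequality gives
   ||x^(n) - x|| <= ((1 + eps)^n - 1) ||x|| <= (n eps + 3^n eps^2) ||x||. *)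

Section L2Norm.
Variables (C : numClosedFieldType) (I : finType).

Definition l2norm (f : I -> C) : C := sqrtC (\sum_i `|f i| ^+ 2).

Lemma sum_sqr_norm_ge0 (f : I -> C) : 0 <= \sum_i `|f i| ^+ 2.
Proof. by apply: sumr_ge0 => i _; apply: exprn_ge0. Qed.

Lemma l2norm_ge0 (f : I -> C) : 0 <= l2norm f.
Proof. by rewrite sqrtC_ge0 sum_sqr_norm_ge0. Qed.

Lemma l2norm_gt0 (f : I -> C) i : f i != 0 -> 0 < l2norm f.
Proof.
move=> fi_neq0; rewrite sqrtC_gt0 lt_def sum_sqr_norm_ge0 andbT.
apply: contra fi_neq0 => /eqP sum_eq0.
have /eqP := psumr_eq0P (fun k _ => exprn_ge0 2 (normr_ge0 (f k))) sum_eq0 (i := i) isT.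
by rewrite expf_eq0 normr_eq0.
Qed.

Lemma cauchy_schwarz_ge0 (a b : I -> C) :
    (forall i, 0 <= a i) -> (forall i, 0 <= b i) ->
  (\sum_i a i * b i) ^+ 2 <= (\sum_i a i ^+ 2) * (\sum_i b i ^+ 2).
Proof.
move=> a_ge0 b_ge0.
set A := \sum_i a i ^+ 2; set B := \sum_i b i ^+ 2; set S := \sum_i a i * b i.
have A_ge0 : 0 <= A by apply: sumr_ge0 => i _; apply: exprn_ge0.
have [A_eq0 | A_neq0] := eqVneq A 0.
  have a_eq0 i : a i = 0.
    have /eqP := psumr_eq0P (fun i _ => exprn_ge0 2 (a_ge0 i)) A_eq0 (i := i) isT.
    by rewrite expf_eq0 => /eqP.
  have -> : S = 0 by rewrite /S big1 // => i _; rewrite a_eq0 mul0r.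
  by rewrite expr0n mulr_ge0 // sumr_ge0 // => i _; apply: exprn_ge0.
(* 0 <= sum_i (A b_i - S a_i)^2 = A (A B - S^2) *)
have sum_sqr : \sum_i (A * b i - S * a i) ^+ 2 = A * (A * B - S ^+ 2).
  rewrite (eq_bigr (fun i => A ^+ 2 * b i ^+ 2 - (2 * A * S) * (a i * b i)
     + S ^+ 2 * a i ^+ 2)); last by move=> i _; ring.
  rewrite big_split /= sumrB -!mulr_sumr -/A -/B -/S; ring.
have : 0 <= \sum_i (A * b i - S * a i) ^+ 2.
  have S_ge0 : 0 <= S by apply: sumr_ge0 => i _; apply: mulr_ge0.
  apply: sumr_ge0 => i _; rewrite -realEsqr.
  by rewrite rpredB ?rpredM ?ger0_real.
have A_gt0 : 0 < A by rewrite lt_def A_neq0.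
by rewrite sum_sqr pmulr_rge0 // subr_ge0.
Qed.

Lemma l2normD (f g : I -> C) :
  l2norm (fun i => f i + g i) <= l2norm f + l2norm g.
Proof.
set nf := l2norm f; set ng := l2norm g.
have nf_ge0 : 0 <= nf := l2norm_ge0 f.
have ng_ge0 : 0 <= ng := l2norm_ge0 g.
have cross : \sum_i `|f i| * `|g i| <= nf * ng.
  rewrite -ler_sqr ?qualifE /= ?mulr_ge0 ?sumr_ge0 // => [|i _].
    by rewrite exprMn !sqrtCK; apply: cauchy_schwarz_ge0.
  exact: mulr_ge0.
have sqr_le : \sum_i `|f i + g i| ^+ 2 <= (nf + ng) ^+ 2.
  apply: le_trans (_ : \sum_i (`|f i| + `|g i|) ^+ 2 <= _).
    apply: ler_sum => i _; apply: lerXn2r; rewrite ?qualifE /= ?addr_ge0 //.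
    exact: ler_normD.
  rewrite (eq_bigr (fun i => `|f i| ^+ 2 + `|g i| ^+ 2 + 2 * (`|f i| * `|g i|)));
    last by move=> i _; ring.
  have -> : (nf + ng) ^+ 2 = nf ^+ 2 + ng ^+ 2 + 2 * (nf * ng) by ring.
  by rewrite !big_split /= -mulr_sumr !sqrtCK lerD2l ler_wpM2l.
rewrite -[nf + ng]sqrCK ?addr_ge0 // ler_sqrtC ?qualifE /= ?exprn_ge0 ?addr_ge0 //.
exact: sum_sqr_norm_ge0.
Qed.

End L2Norm.

Section Drift.
Variables (C : numFieldType) (V : zmodType) (N : V -> C).
Hypotheses (N0 : N 0 = 0) (ND : forall u v, N (u + v) <= N u + N v).

Lemma drift_le (e : C) (xs : nat -> V) (m : nat) : 0 <= e ->
    (forall k, (k < m)%N -> N (xs k.+1 - xs k) <= e * N (xs k)) ->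
  N (xs m - xs 0%N) <= ((1 + e) ^+ m - 1) * N (xs 0%N).
Proof.
move=> e_ge0; elim: m => [|m IH] step; first by rewrite subrr N0 expr0 subrr mul0r.
have IHm := IH (fun k lt_km => step k (ltnW lt_km)).
have stepm := step m (ltnSn m).
have split_last : N (xs m.+1 - xs 0%N) <= N (xs m.+1 - xs m) + N (xs m - xs 0%N).
  by have := ND (xs m.+1 - xs m) (xs m - xs 0%N); rewrite addrA subrK.
have size_m : N (xs m) <= N (xs m - xs 0%N) + N (xs 0%N).
  by have := ND (xs m - xs 0%N) (xs 0%N); rewrite subrK.
apply: (le_trans split_last).
have -> : ((1 + e) ^+ m.+1 - 1) * N (xs 0%N) =
   e * (((1 + e) ^+ m - 1) * N (xs 0%N) + N (xs 0%N))
   + ((1 + e) ^+ m - 1) * N (xs 0%N) by rewrite exprS; ring.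
apply: lerD => //; apply: (le_trans stepm); apply: ler_wpM2l => //.
by apply: (le_trans size_m); rewrite lerD2r.
Qed.

End Drift.

Lemma expr1D_le (C : numDomainType) (e : C) (m : nat) : 0 <= e -> e <= 1 ->
  (1 + e) ^+ m <= 1 + m%:R * e + 3%:R ^+ m * e ^+ 2.
Proof.
move=> e_ge0 e_le1; elim: m => [|m IH].
  by rewrite !expr0 mul0r addr0 mul1r lerDl exprn_ge0.
rewrite exprS (le_trans (ler_wpM2l _ IH)) ?addr_ge0 //.
have -> : (1 + e) * (1 + m%:R * e + 3%:R ^+ m * e ^+ 2) =
   1 + m.+1%:R * e + e ^+ 2 * (m%:R + 3%:R ^+ m + 3%:R ^+ m * e) by ring.
have -> : 1 + m.+1%:R * e + 3%:R ^+ m.+1 * e ^+ 2 =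
   1 + m.+1%:R * e + e ^+ 2 * (3%:R ^+ m + 3%:R ^+ m + 3%:R ^+ m).
  by rewrite exprS; ring.
have pow3_ge0 : (0 : C) <= 3%:R ^+ m by rewrite exprn_ge0 // ler0n.
rewrite lerD2l ler_wpM2l ?exprn_ge0 // lerD ?ler_piMr //.
by rewrite lerD2r -natrX ler_nat ltnW // ltn_expl.
Qed.

Section TensorNetworkNorms.
Variables (C : numClosedFieldType) (n : nat) (E : finType)
          (ends : E -> 'I_n * 'I_n) (d : E -> nat).

Local Notation network := (network C ends d).
Local Notation tensor := (tensor C ends d).
Local Notation outTensor := (outTensor C ends d).
Local Notation OutIdx := (OutIdx ends d).
Local Notation FullIdx := (FullIdx d).

Definition matches_out (o : OutIdx) (f : FullIdx) : bool :=
  [forall e : {e : E | is_loop ends e}, f (val e) == o e].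

Definition prod_off (T : network) (j0 : 'I_n) (f : FullIdx) : C :=
  \prod_(j < n | j != j0) T j (restr ends j f).

Lemma contract_replaceE (T : network) j0 (X : tensor j0) o :
  contract (replace T X) o =
  \sum_(f | matches_out o f) X (restr ends j0 f) * prod_off T j0 f.
Proof.
rewrite ffunE; apply: eq_bigr => f _; rewrite (bigD1 j0) //= /replace dfwith_in.
by congr (_ * _); apply: eq_bigr => j neq_j; rewrite dfwith_out // eq_sym.
Qed.

Lemma contract_replace_id (T : network) j0 :
  contract (replace T (T j0)) = contract T.
Proof.
apply/ffunP => o; rewrite contract_replaceE ffunE.
by apply: eq_bigr => f _; rewrite [RHS](bigD1 j0).
Qed.

Lemma contract_replaceD (T : network) j0 (X Y : tensor j0) :
  contract (replace T (X + Y)) = contract (replace T X) + contract (replace T Y).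
Proof.
apply/ffunP => o; rewrite [RHS]ffunE !contract_replaceE -big_split /=.
by apply: eq_bigr => f _; rewrite ffunE mulrDl.
Qed.

Definition vec {j} (X : tensor j) : 'cV[C]_#|LocIdx ends d j| :=
  \col_c X (enum_val c).

Lemma env_mx_vec (T : network) j (X : tensor j) r :
  (env_mx T j *m vec X) r 0 = contract (replace T X) (enum_val r).
Proof.
rewrite mxE contract_replaceE.
under eq_bigr => c _ do rewrite !mxE contract_replaceE mulr_suml.
rewrite exchange_big /=; apply: eq_bigr => f _.
rewrite (bigD1 (enum_rank (restr ends j f))) //= big1 => [|c neq_c].
  by rewrite !ffunE enum_rankK eqxx mul1r addr0 mulrC.
rewrite !ffunE; case: eqP => [eq_f|]; last by rewrite !mul0r.
by move: neq_c; rewrite eq_f enum_valK eqxx.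
Qed.

Lemma sum_sqr_norm_adj k (w : 'cV[C]_k) :
  \sum_r `|w r 0| ^+ 2 = (adjmx w *m w) 0 0.
Proof. by rewrite mxE; apply: eq_bigr => r _; rewrite !mxE normCKC. Qed.

Lemma sum_sqr_norm_enum (T : finType) (F : T -> C) :
  \sum_x `|F x| ^+ 2 = \sum_(r < #|T|) `|F (enum_val r)| ^+ 2.
Proof. exact: (reindex enum_val (onW_bij _ (enum_val_bij T))). Qed.

Lemma sum_sqr_norm_contract_canonical (T : network) j (X : tensor j) :
    canonical_at T j ->
  \sum_o `|contract (replace T X) o| ^+ 2 = \sum_l `|X l| ^+ 2.
Proof.
move=> iso; rewrite sum_sqr_norm_enum [RHS]sum_sqr_norm_enum.
set M := env_mx T j; set v := vec X.
transitivity (\sum_r `|(M *m v) r 0| ^+ 2).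
  by apply: eq_bigr => r _; rewrite env_mx_vec.
transitivity (\sum_c `|v c 0| ^+ 2); last by apply: eq_bigr => c _; rewrite mxE.
have adjmxM : adjmx (M *m v) = adjmx v *m adjmx M.
  by rewrite /adjmx map_mxM trmx_mul.
by rewrite !sum_sqr_norm_adj adjmxM -mulmxA (mulmxA (adjmx M)) iso mul1mx.
Qed.

Lemma norm2_contract_canonical (T : network) j (X : tensor j) :
  canonical_at T j -> norm2 (contract (replace T X)) = frob X.
Proof. by move=> iso; rewrite /norm2 sum_sqr_norm_contract_canonical. Qed.

Lemma norm2_tn_step e j (x y : outTensor) :
  tn_step e j x y -> norm2 (y - x) <= e * norm2 x.
Proof.
case=> T [delta [<- iso delta_le ->]].
rewrite contract_replaceD contract_replace_id addrC addKr.
by rewrite -(contract_replace_id T j) !norm2_contract_canonical.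
Qed.

Lemma norm2_ge0 (y : outTensor) : 0 <= norm2 y.
Proof. exact: (l2norm_ge0 (fun o => y o)). Qed.

Lemma norm2_gt0 (y : outTensor) : y != 0 -> 0 < norm2 y.
Proof.
move=> y_neq0; have [o yo_neq0] : exists o, y o != 0.
  apply/existsP; rewrite -negb_forall; apply: contra y_neq0 => /forallP y0.
  by apply/eqP/ffunP => o; rewrite ffunE; apply/eqP.
exact: (l2norm_gt0 (f := fun o => y o) yo_neq0).
Qed.

Lemma norm2_0 : norm2 (0 : outTensor) = 0.
Proof. by rewrite /norm2 big1 ?sqrtC0 // => o _; rewrite ffunE normr0 expr0n. Qed.

Lemma norm2D (y z : outTensor) : norm2 (y + z) <= norm2 y + norm2 z.
Proof.
have -> : norm2 (y + z) = l2norm (fun o => y o + z o).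
  by rewrite /norm2 /l2norm; congr sqrtC; apply: eq_bigr => o _; rewrite ffunE.
exact: l2normD.
Qed.

End TensorNetworkNorms.

Arguments norm2_0 {C n E ends d}.

Theorem mainTheorem8 (C : numClosedFieldType) (n : nat) (E : finType)
    (ends : E -> 'I_n * 'I_n) (d : E -> nat) :
  exists (K eps0 : C), 0 < eps0 /\
    forall (eps : C) (epsi : 'I_n -> C) (xs : nat -> outTensor C ends d),
      0 <= eps <= eps0 ->
      (forall i, 0 <= epsi i <= eps) ->
      xs 0%N != 0 ->
      (exists T : network C ends d, contract T = xs 0%N) ->
      (forall i : 'I_n, tn_step (epsi i) i (xs i) (xs i.+1)) ->
      norm2 (xs n - xs 0%N) / norm2 (xs 0%N) <= n%:R * eps + K * eps ^+ 2.
Proof.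
exists (3%:R ^+ n), 1; split; first exact: ltr01.
move=> eps epsi xs /andP[eps_ge0 eps_le1] epsi_le xs0_neq0 _ step.
have x0_gt0 := norm2_gt0 xs0_neq0.
have step_le k : (k < n)%N ->
    norm2 (xs k.+1 - xs k) <= eps * norm2 (xs k).
  move=> lt_kn; have /andP[_ epsk_le] := epsi_le (Ordinal lt_kn).
  apply: le_trans (norm2_tn_step (step (Ordinal lt_kn))) _.
  by rewrite ler_wpM2r ?norm2_ge0.
have drift := drift_le norm2_0 (@norm2D _ _ _ _ _) eps_ge0 step_le.
rewrite ler_pdivrMr // (le_trans drift) // ler_pM2r //.
by rewrite lerBlDl addrA expr1D_le.
Qed.
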